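(* Let $p(x,y)$ be a real polynomial with $p(0,0)=0$, $\nabla p(0,0)=(0,0)$, $\dim\operatorname{Co}N_p=2$, such that for every $A\in\mathbb{N}^2$ the main $A$-quasi-homogeneous form of $p$ is nonnegative on $\mathbb{R}^2$. Let $A=(A_1,A_2)\in\mathcal{A}_p$. Write $\varphi_1^A=\sum_{i=1}^s a_ix^{\alpha_i}y^{\beta_i}$ with $a_i\neq0$, $\alpha_1>\dots>\alpha_s\ge0$, and $\varphi_2^A=\sum_{i=1}^v b_ix^{\chi_i}y^{\eta_i}$ with $b_i\neq0$, $\chi_1>\dots>\chi_v\ge0$. Then condition $(C1)_A$ holds (there is $(x_0,y_0)$ with $\varphi_1^A(x_0,y_0)=0$ and $\varphi_2^A(x_0,y_0)<0$) if and only if at least one of the following holds: (a) $\alpha_s>0$, $\chi_v=0$, and ($b_v<0$ or $\eta_v$ is not a positive even integer); (b) $\beta_1>0$, $\eta_1=0$, and ($b_1<0$ or $\chi_1$ is not a positive even integer); (c) there exists $u_0\in U_p(A)$ such that the system $x\neq0$, $y\neq0$, $x^{-A_2}y^{A_1}=u_0$, $x^{\chi_1}y^{\eta_1}g_2^A(u_0)<0$ has a real solution $(x,y)$.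
   Context: $\mathbb{N}=\{1,2,\dots\}$; $\mathbb{N}_0^2$ is the set of $(A_1,A_2)\in\mathbb{N}^2$ with $\gcd(A_1,A_2)=1$. $N_p$ is the support of $p$ (exponent vectors of terms with nonzero coefficients) and $\operatorname{Co}N_p$ its convex hull. For $A\in\mathbb{N}^2$ the main $A$-quasi-homogeneous form of $p$ is the sum of the terms of $p$ whose exponent vectors $k$ minimize $\langle A,k\rangle$ over $N_p$. For $A\in\mathbb{N}_0^2$, with $B_1^A<B_2^A<\dots$ the distinct values of $\langle A,k\rangle$, $k\in N_p$, $\varphi_i^A$ is the sum of the terms of $p$ with $\langle A,k\rangle=B_i^A$ (so $\varphi_1^A$ is the main form, and $\varphi_2^A\not\equiv0$ here). The characteristic polynomial of a form $\sum_i c_ix^{\gamma_i}y^{\delta_i}$ ($c_i\neq0$, $\gamma_1>\gamma_2>\dots$) from this decomposition is $\sum_i c_iu^{(\gamma_1-\gamma_i)/A_2}$; $g_1^A,g_2^A$ are those of $\varphi_1^A,\varphi_2^A$. $\mathcal{A}_p$ is the set of $A\in\mathbb{N}_0^2$ such that $\varphi_1^A$ has at least three terms, $g_1^A\ge0$ on $\mathbb{R}$, and $g_1^A$ has a real root; $U_p(A)$ is the set of real roots of $g_1^A$. *)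

From HB Require Import structures.
From mathcomp Require Import all_boot all_order all_algebra.
From mathcomp Require Import reals.
Set Implicit Arguments. Unset Strict Implicit. Unset Printing Implicit Defensive.
Import Order.TTheory GRing.Theory Num.Theory.
Local Open Scope ring_scope.

Section Defs.
Variable R : realType.

(* A bivariate polynomial p(x,y) is an element of {poly {poly R}}:
   the coefficient of x^i y^j is p`_i`_j. *)
Definition coef2 (p : {poly {poly R}}) (k : nat * nat) : R := p`_k.1`_k.2.

Definition supp (p : {poly {poly R}}) : seq (nat * nat) :=
  [seq k <- [seq (i, j) | i <- iota 0 (size p), j <- iota 0 (size p`_i)]
     | coef2 p k != 0].

Definition eval2 (p : {poly {poly R}}) (x y : R) : R :=
  \sum_(k <- supp p) coef2 p k * x ^+ k.1 * y ^+ k.2.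

(* dim Co N_p = 2 : N_p contains three affinely independent points. *)
Definition full_dim (p : {poly {poly R}}) : Prop :=
  exists k1 k2 k3, [/\ k1 \in supp p, k2 \in supp p & k3 \in supp p] /\
    ((k2.1%:Z - k1.1%:Z) * (k3.2%:Z - k1.2%:Z)
      != (k3.1%:Z - k1.1%:Z) * (k2.2%:Z - k1.2%:Z))%R.

Definition wt (A : nat * nat) (k : nat * nat) : nat := (A.1 * k.1 + A.2 * k.2)%N.

(* B_1^A < B_2^A < ... : the distinct values of <A,k>, k in N_p
   (0-indexed: Bval p A 0 = B_1^A, Bval p A 1 = B_2^A). *)
Definition Bvals (p : {poly {poly R}}) (A : nat * nat) : seq nat :=
  sort leq (undup (map (wt A) (supp p))).
Definition Bval (p : {poly {poly R}}) (A : nat * nat) (n : nat) : nat :=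
  nth 0%N (Bvals p A) n.

(* the exponent vectors of the terms of phi_{n+1}^A, sorted by strictly
   decreasing x-exponent: [(alpha_1,beta_1); ...; (alpha_s,beta_s)] *)
Definition terms (p : {poly {poly R}}) (A : nat * nat) (n : nat)
  : seq (nat * nat) :=
  sort (fun k l : nat * nat => (l.1 <= k.1)%N)
    [seq k <- supp p | wt A k == Bval p A n].

(* phi_{n+1}^A (x,y); for n = 0 this is the main A-quasi-homogeneous form *)
Definition phi (p : {poly {poly R}}) (A : nat * nat) (n : nat) (x y : R) : R :=
  \sum_(k <- terms p A n) coef2 p k * x ^+ k.1 * y ^+ k.2.

Definition first_exp p A n : nat * nat := head (0%N, 0%N) (terms p A n).
Definition last_exp p A n : nat * nat := last (0%N, 0%N) (terms p A n).

Definition charpoly (p : {poly {poly R}}) (A : nat * nat) (n : nat) : {poly R} :=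
  \sum_(k <- terms p A n)
     (coef2 p k)%:P * 'X^(((first_exp p A n).1 - k.1) %/ A.2)%N.

Definition in_N0 (A : nat * nat) : Prop :=
  [/\ (0 < A.1)%N, (0 < A.2)%N & coprime A.1 A.2].

Definition in_Ap (p : {poly {poly R}}) (A : nat * nat) : Prop :=
  [/\ in_N0 A, (3 <= size (terms p A 0))%N,
      (forall u : R, 0 <= (charpoly p A 0).[u])
    & exists u : R, root (charpoly p A 0) u].

Definition C1 (p : {poly {poly R}}) (A : nat * nat) : Prop :=
  exists x0 y0 : R, phi p A 0 x0 y0 = 0 /\ phi p A 1 x0 y0 < 0.

End Defs.

(* On the torus x y <> 0 the exponent vectors of an A-quasi-homogeneous form
   differ by multiples of (A_2, -A_1) (A_1, A_2 coprime), so each form factors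
   as x^gamma y^delta g(x^-A_2 y^A_1); hence phi_1 vanishes there exactly over
   the real roots of g_1, which gives (c). On the axis x = 0 only the term with
   the least x-exponent survives, and on y = 0 only the one with the largest,
   so there the question is whether c t^n takes a negative value, i.e. whether
   c < 0 or n is odd: this gives (a) and (b). *)

From HB Require Import structures.
From mathcomp Require Import all_boot all_order all_algebra.
From mathcomp Require Import reals.
From mathcomp Require Import zify ring.
Set Implicit Arguments. Unset Strict Implicit. Unset Printing Implicit Defensive.
Import Order.TTheory GRing.Theory Num.Theory.
Local Open Scope ring_scope.

Lemma wt_eq_shift (A k l : nat * nat) : (0 < A.2)%N -> coprime A.1 A.2 ->
  wt A k = wt A l -> (k.1 <= l.1)%N ->
  exists m, l.1 = (k.1 + m * A.2)%N /\ k.2 = (l.2 + m * A.1)%N.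
Proof.
rewrite /wt => A2_gt0 coA kl_wt kl1.
have A1kl : (A.1 * k.1 <= A.1 * l.1)%N by rewrite leq_mul2l kl1 orbT.
have lk2 : (l.2 <= k.2)%N by rewrite -(leq_pmul2l A2_gt0); lia.
have kl_eq : (A.1 * (l.1 - k.1) = A.2 * (k.2 - l.2))%N by rewrite !mulnBr; lia.
have /dvdnP[m lk1] : (A.2 %| l.1 - k.1)%N.
  by rewrite -(@Gauss_dvdr _ A.1) 1?coprime_sym // kl_eq dvdn_mulr.
exists m; split; first by lia.
have : (A.2 * (k.2 - l.2) = A.2 * (m * A.1))%N by rewrite -kl_eq lk1; ring.
by move/eqP; rewrite eqn_pmul2l // => /eqP; lia.
Qed.

Lemma wt_eq_collinear (A k1 k2 k3 : nat * nat) : (0 < A.2)%N ->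
  wt A k2 = wt A k1 -> wt A k3 = wt A k1 ->
  ((k2.1%:Z - k1.1%:Z) * (k3.2%:Z - k1.2%:Z)
    = (k3.1%:Z - k1.1%:Z) * (k2.2%:Z - k1.2%:Z))%R.
Proof. by rewrite /wt => A2_gt0 w21 w31; nia. Qed.

Local Notation geq_fst := (fun k l : nat * nat => (l.1 <= k.1)%N).

Lemma geq_fst_refl : reflexive geq_fst.
Proof. by move=> k; rewrite /= leqnn. Qed.

Lemma geq_fst_trans : transitive geq_fst.
Proof. by move=> k j l /= jk lj; apply: leq_trans lj jk. Qed.

Lemma exists_monomial_lt0 (R : realDomainType) (c : R) n : c != 0 ->
  (exists t, c * t ^+ n < 0) <-> c < 0 \/ odd n.
Proof.
move=> c_neq0; split=> [[t ct_lt0]|c_n].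
  have [c_lt0|c_ge0] := ltP c 0; [by left | right].
  apply: contraLR ct_lt0 => n_even; rewrite -leNgt.
  exact: mulr_ge0 c_ge0 (exprn_even_ge0 _ n_even).
have [c_lt0|c_ge0] := ltP c 0; first by exists 1; rewrite expr1n mulr1.
case: c_n => [|n_odd]; first by rewrite ltNge c_ge0.
by exists (-1); rewrite -signr_odd n_odd mulrN1 oppr_lt0 lt_def c_neq0.
Qed.

Lemma axis_monomials_iff (R : realDomainType) (c0 c1 : R) (a0 b0 a1 b1 : nat) :
  c0 != 0 -> c1 != 0 -> (0 < a1 + b1)%N ->
  (exists t, c0 * 0 ^+ a0 * t ^+ b0 = 0 /\ c1 * 0 ^+ a1 * t ^+ b1 < 0) <->
  [/\ (0 < a0)%N, a1 = 0%N & (c1 < 0 \/ ~ ((0 < b1)%N /\ ~~ odd b1))].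
Proof.
move=> c0_neq0 c1_neq0 ab1_gt0.
have sign_odd : a1 = 0%N ->
    (c1 < 0 \/ odd b1) <-> (c1 < 0 \/ ~ ((0 < b1)%N /\ ~~ odd b1)).
  move=> a1_0; rewrite a1_0 /= in ab1_gt0; rewrite ab1_gt0.
  by case: (odd b1); intuition.
split=> [[t [h0 h1]]|[a0_gt0 a1_0 sign_c1]].
  have a1_0 : a1 = 0%N.
    by case: a1 h1 {ab1_gt0 sign_odd} => // a1; rewrite expr0n mulr0 mul0r ltxx.
  rewrite a1_0 expr0n mulr1 in h1; rewrite a1_0 /= in ab1_gt0.
  have t_neq0 : t != 0.
    by apply: contraTneq h1 => ->; rewrite expr0n eqn0Ngt ab1_gt0 mulr0 ltxx.
  split=> //; last by apply/sign_odd/(exists_monomial_lt0 _ c1_neq0) => //; exists t.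
  have ct_neq0 : c0 * t ^+ b0 != 0 by rewrite mulf_neq0 ?expf_neq0.
  rewrite lt0n; apply: contraNneq ct_neq0 => a0_0.
  by rewrite -[X in _ == X]h0 a0_0 expr0n mulr1.
have /(exists_monomial_lt0 _ c1_neq0)[t ht] := (sign_odd a1_0).2 sign_c1.
exists t; split; last by rewrite a1_0 expr0 mulr1.
by rewrite expr0n eqn0Ngt a0_gt0 mulr0 mul0r.
Qed.

Section QuasiHomogeneousForms.
Variables (R : realType) (p : {poly {poly R}}) (A : nat * nat).
Hypothesis A_N0 : in_N0 A.

Lemma terms_sorted n : sorted geq_fst (terms p A n).
Proof. by apply: sort_sorted => k l; rewrite leq_total. Qed.

Lemma terms_uniq n : uniq (terms p A n).
Proof.
rewrite sort_uniq; do 2!apply: filter_uniq.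
apply: allpairs_uniq_dep => [||[a b] [c d] _ _ /= [-> ->]] //; first exact: iota_uniq.
by move=> i _; exact: iota_uniq.
Qed.

Lemma mem_terms n k : k \in terms p A n -> coef2 p k != 0 /\ wt A k = Bval p A n.
Proof. by rewrite mem_sort mem_filter mem_filter => /andP[/eqP -> /andP[-> _]]. Qed.

Lemma wt_terms n k l : k \in terms p A n -> l \in terms p A n -> wt A k = wt A l.
Proof. by move=> /mem_terms[_ ->] /mem_terms[_ ->]. Qed.

Lemma terms_deg_gt0 n k :
  coef2 p (0, 0)%N = 0 -> k \in terms p A n -> (0 < k.1 + k.2)%N.
Proof. by move=> c00 /mem_terms[+ _]; case: k => [[|a] [|b]] //=; rewrite c00 eqxx. Qed.

Lemma first_exp_mem n : terms p A n != [::] -> first_exp p A n \in terms p A n.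
Proof. by rewrite /first_exp; case: (terms p A n) => //= f s _; exact: mem_head. Qed.

Lemma last_exp_mem n : terms p A n != [::] -> last_exp p A n \in terms p A n.
Proof.
rewrite /last_exp; case/lastP: (terms p A n) => //= s l _.
by rewrite last_rcons mem_rcons mem_head.
Qed.

Lemma first_exp_max n k : k \in terms p A n -> (k.1 <= (first_exp p A n).1)%N.
Proof.
move=> kT; rewrite -(nth_index (0, 0)%N kT) /first_exp -nth0.
apply: (sorted_leq_nth geq_fst_trans geq_fst_refl _ (terms_sorted n)) => //.
  by rewrite inE; case: (terms p A n) kT.
by rewrite inE index_mem.
Qed.

Lemma last_exp_min n k : k \in terms p A n -> ((last_exp p A n).1 <= k.1)%N.
Proof.
move=> kT; rewrite -(nth_index (0, 0)%N kT) /last_exp -nth_last.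
have size_gt0 : (0 < size (terms p A n))%N by case: (terms p A n) kT.
apply: (sorted_leq_nth geq_fst_trans geq_fst_refl _ (terms_sorted n)).
- by rewrite inE index_mem.
- by rewrite inE ltn_predL.
- by rewrite -ltnS prednK // index_mem.
Qed.

Lemma terms_shift n k l : k \in terms p A n -> l \in terms p A n ->
  (k.1 <= l.1)%N -> k != l ->
  exists m, [/\ (0 < m)%N, l.1 = (k.1 + m * A.2)%N & k.2 = (l.2 + m * A.1)%N].
Proof.
case: A_N0 => _ A2_gt0 coA kT lT kl1 k_neq_l.
have [m [lk1 kl2]] := wt_eq_shift A2_gt0 coA (wt_terms kT lT) kl1.
exists m; split=> //; rewrite lt0n; apply: contra k_neq_l => /eqP m0.
by apply/eqP/injective_projections; rewrite ?lk1 ?kl2 m0 addn0.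
Qed.

Lemma phi_x0 n y : terms p A n != [::] ->
  phi p A n 0 y
    = coef2 p (last_exp p A n) * 0 ^+ (last_exp p A n).1 * y ^+ (last_exp p A n).2.
Proof.
move=> tn; have lT := last_exp_mem tn.
rewrite /phi (bigD1_seq _ lT (terms_uniq n)) /= big1_seq ?addr0 //.
move=> k /andP[kl kT]; rewrite eq_sym in kl.
have [m [m_gt0 k1 _]] := terms_shift lT kT (last_exp_min kT) kl.
have [_ A2_gt0 _] := A_N0.
by rewrite k1 expr0n addn_eq0 muln_eq0 !eqn0Ngt m_gt0 A2_gt0 andbF mulr0 mul0r.
Qed.

Lemma phi_y0 n x : terms p A n != [::] ->
  phi p A n x 0
    = coef2 p (first_exp p A n) * 0 ^+ (first_exp p A n).2 * x ^+ (first_exp p A n).1.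
Proof.
move=> tn; have fT := first_exp_mem tn.
rewrite /phi (bigD1_seq _ fT (terms_uniq n)) /= big1_seq ?addr0 1?mulrAC //.
move=> k /andP[kf kT].
have [m [m_gt0 _ k2]] := terms_shift kT fT (first_exp_max kT) kf.
have [A1_gt0 _ _] := A_N0.
by rewrite k2 expr0n addn_eq0 muln_eq0 !eqn0Ngt m_gt0 A1_gt0 andbF mulr0.
Qed.

Lemma phi_charpolyE n x y : x != 0 -> y != 0 ->
  phi p A n x y = x ^+ (first_exp p A n).1 * y ^+ (first_exp p A n).2
                  * (charpoly p A n).[x ^- A.2 * y ^+ A.1].
Proof.
move=> x_neq0 y_neq0; rewrite /phi /charpoly horner_sum mulr_sumr.
apply: eq_big_seq => k kT; have [_ A2_gt0 coA] := A_N0.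
have fT : first_exp p A n \in terms p A n.
  by apply: first_exp_mem; case: (terms p A n) kT.
have [m [f1 k2]] := wt_eq_shift A2_gt0 coA (wt_terms kT fT) (first_exp_max kT).
rewrite f1 addKn mulnK // hornerCM hornerXn k2 !exprD exprMn exprVn -!exprM.
rewrite [(m * A.2)%N]mulnC [(m * A.1)%N]mulnC; field.
by rewrite expf_neq0.
Qed.

Lemma terms1_neq_nil : full_dim p -> terms p A 1 != [::].
Proof.
case=> k1 [k2 [k3 [[k1p k2p k3p] det_neq0]]].
have [B_gt1|B_le1] := ltnP 1 (size (Bvals p A)).
  have : Bval p A 1 \in Bvals p A by exact: mem_nth.
  rewrite mem_sort mem_undup => /mapP[k kp wt_k].
  have : k \in terms p A 1 by rewrite mem_sort mem_filter kp -wt_k eqxx.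
  by case: (terms p A 1).
have wt_const k : k \in supp p -> wt A k = wt A k1.
  have wt_Bvals l : l \in supp p -> wt A l \in Bvals p A.
    by move=> lp; rewrite mem_sort mem_undup map_f.
  move=> /wt_Bvals kB; move: B_le1 kB (wt_Bvals _ k1p).
  by case: (Bvals p A) => [|b [|]] //= _; rewrite !inE => /eqP-> /eqP->.
have [_ A2_gt0 _] := A_N0.
move: det_neq0.
by rewrite (wt_eq_collinear A2_gt0 (wt_const _ k2p) (wt_const _ k3p)) eqxx.
Qed.

Lemma C1_x0_iff : coef2 p (0, 0)%N = 0 ->
  terms p A 0 != [::] -> terms p A 1 != [::] ->
  (exists y, phi p A 0 0 y = 0 /\ phi p A 1 0 y < 0) <->
  [/\ (0 < (last_exp p A 0).1)%N, (last_exp p A 1).1 = 0%N &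
      (coef2 p (last_exp p A 1) < 0 \/
       ~ ((0 < (last_exp p A 1).2)%N /\ ~~ odd (last_exp p A 1).2))].
Proof.
move=> c00 t0 t1; set l0 := last_exp p A 0; set l1 := last_exp p A 1.
have [l0T l1T] := (last_exp_mem t0, last_exp_mem t1).
rewrite -(@axis_monomials_iff _ (coef2 p l0) (coef2 p l1) l0.1 l0.2 l1.1 l1.2)
  ?(mem_terms l0T).1 ?(mem_terms l1T).1 ?(terms_deg_gt0 c00 l1T) //.
by split=> -[y h]; exists y; move: h; rewrite !phi_x0.
Qed.

Lemma C1_y0_iff : coef2 p (0, 0)%N = 0 ->
  terms p A 0 != [::] -> terms p A 1 != [::] ->
  (exists x, phi p A 0 x 0 = 0 /\ phi p A 1 x 0 < 0) <->
  [/\ (0 < (first_exp p A 0).2)%N, (first_exp p A 1).2 = 0%N &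
      (coef2 p (first_exp p A 1) < 0 \/
       ~ ((0 < (first_exp p A 1).1)%N /\ ~~ odd (first_exp p A 1).1))].
Proof.
move=> c00 t0 t1; set f0 := first_exp p A 0; set f1 := first_exp p A 1.
have [f0T f1T] := (first_exp_mem t0, first_exp_mem t1).
rewrite -(@axis_monomials_iff _ (coef2 p f0) (coef2 p f1) f0.2 f0.1 f1.2 f1.1)
  ?(mem_terms f0T).1 ?(mem_terms f1T).1 1?addnC ?(terms_deg_gt0 c00 f1T) //.
by split=> -[x h]; exists x; move: h; rewrite !phi_y0.
Qed.

Lemma C1_torus_iff :
  (exists x y, [/\ x != 0, y != 0, phi p A 0 x y = 0 & phi p A 1 x y < 0]) <->
  exists u0, root (charpoly p A 0) u0 /\
    exists x y, [/\ x != 0, y != 0, x ^- A.2 * y ^+ A.1 = u0 &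
      x ^+ (first_exp p A 1).1 * y ^+ (first_exp p A 1).2 * (charpoly p A 1).[u0] < 0].
Proof.
split=> [[x [y [x_neq0 y_neq0]]]|[u0 [g1u0 [x [y [x_neq0 y_neq0 xyu0]]]]]].
  rewrite !phi_charpolyE // => phi1_0 phi2_lt0.
  exists (x ^- A.2 * y ^+ A.1); split; last by exists x, y.
  have xy_neq0 := mulf_neq0 (expf_neq0 (first_exp p A 0).1 x_neq0)
                            (expf_neq0 (first_exp p A 0).2 y_neq0).
  by apply/rootP; move/eqP: phi1_0; rewrite mulf_eq0 (negbTE xy_neq0) => /eqP.
by exists x, y; rewrite !phi_charpolyE // xyu0 (rootP g1u0) mulr0.
Qed.

End QuasiHomogeneousForms.

Theorem mainTheorem6 (R : realType) (p : {poly {poly R}}) (A : nat * nat) :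
  coef2 p (0, 0)%N = 0 ->
  coef2 p (1, 0)%N = 0 -> coef2 p (0, 1)%N = 0 ->
  full_dim p ->
  (forall A' : nat * nat, (0 < A'.1)%N -> (0 < A'.2)%N ->
     forall x y : R, 0 <= phi p A' 0 x y) ->
  in_Ap p A ->
  C1 p A <->
  [\/ [/\ (0 < (last_exp p A 0).1)%N, (last_exp p A 1).1 = 0%N &
          (coef2 p (last_exp p A 1) < 0 \/
           ~ ((0 < (last_exp p A 1).2)%N /\ ~~ odd (last_exp p A 1).2))],
      [/\ (0 < (first_exp p A 0).2)%N, (first_exp p A 1).2 = 0%N &
          (coef2 p (first_exp p A 1) < 0 \/
           ~ ((0 < (first_exp p A 1).1)%N /\ ~~ odd (first_exp p A 1).1))]
    | exists u0 : R, root (charpoly p A 0) u0 /\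
        exists x y : R, [/\ x != 0, y != 0, x ^- A.2 * y ^+ A.1 = u0 &
          x ^+ (first_exp p A 1).1 * y ^+ (first_exp p A 1).2
            * (charpoly p A 1).[u0] < 0]].
Proof.
move=> c00 _ _ full_p _ [A_N0 size_t0 _ _].
have t0 : terms p A 0 != [::] by case: (terms p A 0) size_t0.
have t1 := terms1_neq_nil A_N0 full_p.
have x0E := C1_x0_iff A_N0 c00 t0 t1; have y0E := C1_y0_iff A_N0 c00 t0 t1.
have torusE := C1_torus_iff p A_N0.
split=> [[x [y [phi1_0 phi2_lt0]]]|[/x0E[y h]|/y0E[x h]|/torusE[x [y [_ _ h1 h2]]]]].
- have [x0|x_neq0] := eqVneq x 0; first by subst x; apply: Or31; apply/x0E; exists y.
  have [y0|y_neq0] := eqVneq y 0; first by subst y; apply: Or32; apply/y0E; exists x.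
  by apply: Or33; apply/torusE; exists x, y.
- by exists 0, y.
- by exists x, 0.
- by exists x, y.
Qed.
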